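(* Let $\alpha:A^{\Delta}\to(H,V)\circ{\cal U}_1$ be a homomorphism, where $(H,V)$ is a finite forest algebra with $H$ idempotent and commutative, and let $\pi$ be the projection homomorphism from $(H,V)\circ{\cal U}_1$ onto $(H,V)$. If $\beta=\pi\alpha$ is nonconfusing, then $\alpha$ is nonconfusing.
   Context: $A^{\Delta}$: free forest algebra of forests and contexts over $A$. Forest algebra: additive monoid $H$, monoid $V$ acting faithfully on the left, containing $g\mapsto g+h$, $g\mapsto h+g$. Wreath product $(H_1,V_1)\circ(H_2,V_2)=(H_1\times H_2,V_1\times V_2^{H_1})$ with componentwise addition and $(v,f)(h_1,h_2)=(vh_1,f(h_1)h_2)$; $\pi(h_1,h_2)=h_1$, $\pi(v,f)=v$. ${\cal U}_1=(\{0,\infty\},\{1,0\})$ with $0+x=x$, $\infty+x=\infty$, $1$ the identity and $0$ the constant map to $\infty$. Reachability: $h\le h'$ iff $h=vh'$ for some $v$; classes of mutual reachability; $h>\Gamma$ means strictly above. For $\gamma$ and class $\Gamma$, $\gamma_\Gamma$ is the quotient identifying $\{h:h\not>\Gamma\}$ to one absorbing $\infty$; $s^{\gamma_\Gamma}$ relabels each node with subtree $at$ by $(a,\gamma_\Gamma(t))$. $\sim_k$ on forests over an alphabet $B$: $\sim_0$ total, $s\sim_{k+1}s'$ iff the sets $\{(b_i,[s_i]_{\sim_k})\}$ for $s=\sum b_is_i$, $s'=\sum b'_js'_j$ coincide. $s_1\equiv_{\gamma,k,\Gamma}s_2$ iff $(s_1)^{\gamma_\Gamma}\sim_k(s_2)^{\gamma_\Gamma}$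 and $\gamma(s_1),\gamma(s_2)\in\Gamma$. $\gamma$ is nonconfusing if there is $k>0$ such that for every reachability class $\Gamma$ of its target, $s_1\equiv_{\gamma,k,\Gamma}s_2$ implies $\gamma(s_1)=\gamma(s_2)$. *)

From Stdlib Require Import ClassicalEpsilon.
From mathcomp Require Import all_boot.
Set Implicit Arguments. Unset Strict Implicit. Unset Printing Implicit Defensive.

Inductive tree (A : Type) : Type := Node : A -> seq (tree A) -> tree A.
Arguments Node {A} _ _.
Definition forest (A : Type) := seq (tree A).

(* contexts: forests with exactly one hole.
   CHole l r        = l + [] + r
   CNode l a c r    = l + a(c) + r *)
Inductive ctx (A : Type) : Type :=
| CHole : forest A -> forest A -> ctx A
| CNode : forest A -> A -> ctx A -> forest A -> ctx A.
Arguments CHole {A} _ _.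
Arguments CNode {A} _ _ _ _.

Fixpoint plug {A} (c : ctx A) (h : forest A) : forest A :=
  match c with
  | CHole l r => l ++ h ++ r
  | CNode l a c' r => l ++ Node a (plug c' h) :: r
  end.

Definition ctx_wrap {A} (l : forest A) (d : ctx A) (r : forest A) : ctx A :=
  match d with
  | CHole l' r' => CHole (l ++ l') (r' ++ r)
  | CNode l' a c r' => CNode (l ++ l') a c (r' ++ r)
  end.

Fixpoint ctx_comp {A} (c d : ctx A) : ctx A :=
  match c with
  | CHole l r => ctx_wrap l d r
  | CNode l a c' r => CNode l a (ctx_comp c' d) r
  end.

Record falg : Type := FAlg {
  fH : Type; fV : Type;
  fzero : fH; fadd : fH -> fH -> fH;
  fone : fV; fmul : fV -> fV -> fV;
  fact : fV -> fH -> fH }.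
Arguments fzero : clear implicits.
Arguments fadd : clear implicits.
Arguments fone : clear implicits.
Arguments fmul : clear implicits.
Arguments fact : clear implicits.

Definition is_falg (T : falg) : Prop :=
  (forall x y z, fadd T x (fadd T y z) = fadd T (fadd T x y) z) /\
  (forall x, fadd T (fzero T) x = x) /\ (forall x, fadd T x (fzero T) = x) /\
  (forall u v w, fmul T u (fmul T v w) = fmul T (fmul T u v) w) /\
  (forall v, fmul T (fone T) v = v) /\ (forall v, fmul T v (fone T) = v) /\
  (forall v w h, fact T (fmul T v w) h = fact T v (fact T w h)) /\
  (forall h, fact T (fone T) h = h) /\
  (forall v w, (forall h, fact T v h = fact T w h) -> v = w) /\
  (forall h, (exists v, forall g, fact T v g = fadd T g h)
          /\ (exists v, forall g, fact T v g = fadd T h g)).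

Definition finite_type (X : Type) : Prop := exists s : seq X, forall x, List.In x s.

Definition finite_falg (T : falg) : Prop := finite_type (fH T) /\ finite_type (fV T).

Definition free_falg (A : Type) : falg :=
  @FAlg (forest A) (ctx A) [::] (@cat _) (CHole [::] [::]) (@ctx_comp A) (@plug A).

Definition is_hom (S T : falg) (fh : fH S -> fH T) (fv : fV S -> fV T) : Prop :=
  [/\ fh (fzero S) = fzero T,
      (forall x y, fh (fadd S x y) = fadd T (fh x) (fh y)),
      fv (fone S) = fone T,
      (forall v w, fv (fmul S v w) = fmul T (fv v) (fv w))
    & forall v x, fh (fact S v x) = fact T (fv v) (fh x)].

Arguments is_hom : clear implicits.

Definition wreath (T1 T2 : falg) : falg :=
  @FAlg (fH T1 * fH T2) (fV T1 * (fH T1 -> fV T2))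
    (fzero T1, fzero T2)
    (fun x y => (fadd T1 x.1 y.1, fadd T2 x.2 y.2))
    (fone T1, fun _ => fone T2)
    (fun x y => (fmul T1 x.1 y.1, fun h => fmul T2 (x.2 (fact T1 y.1 h)) (y.2 h)))
    (fun v h => (fact T1 v.1 h.1, fact T2 (v.2 h.1) h.2)).

Definition pi_H (T1 T2 : falg) (x : fH (wreath T1 T2)) : fH T1 := x.1.
Definition pi_V (T1 T2 : falg) (x : fV (wreath T1 T2)) : fV T1 := x.1.

(* U_1 = ({0, oo}, {1, 0}) *)
Inductive U1H : Type := U1zero | U1inf.
Inductive U1V : Type := U1one | U1const.
Definition U1add (x y : U1H) : U1H := match x with U1zero => y | U1inf => U1inf end.
Definition U1mul (u v : U1V) : U1V := match u with U1one => v | U1const => U1const end.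
Definition U1act (u : U1V) (x : U1H) : U1H := match u with U1one => x | U1const => U1inf end.
Definition U1 : falg := @FAlg U1H U1V U1zero U1add U1one U1mul U1act.

Definition reach (T : falg) (h h' : fH T) : Prop := exists v, h = fact T v h'.
Definition in_class (T : falg) (h0 h : fH T) : Prop := reach h h0 /\ reach h0 h.
Definition above_class (T : falg) (h0 h : fH T) : Prop := reach h0 h /\ ~ reach h h0.

(* gamma_Gamma: keeps h if h > Gamma, sends every other h to the absorbing oo (None) *)
Definition quot_val (T : falg) (h0 h : fH T) : option (fH T) :=
  if excluded_middle_informative (above_class h0 h) then Some h else None.

Fixpoint relabel_t {A B} (f : forest A -> B) (t : tree A) : tree (A * B) :=
  match t with Node a ts => Node (a, f ts) (map (relabel_t f) ts) end.
Definition relabel {A B} (f : forest A -> B) (s : forest A) : forest (A * B) :=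
  map (relabel_t f) s.

Fixpoint simk {B} (k : nat) (s s' : forest B) : Prop :=
  match k with
  | 0 => True
  | k'.+1 =>
      (forall b t, List.In (Node b t) s ->
         exists t', List.In (Node b t') s' /\ simk k' t t') /\
      (forall b t', List.In (Node b t') s' ->
         exists t, List.In (Node b t) s /\ simk k' t t')
  end.

Definition equiv_gkG {A} (T : falg) (g : forest A -> fH T) (k : nat) (h0 : fH T)
    (s1 s2 : forest A) : Prop :=
  [/\ simk k (relabel (fun t => quot_val h0 (g t)) s1)
             (relabel (fun t => quot_val h0 (g t)) s2),
      in_class h0 (g s1) & in_class h0 (g s2)].

Definition nonconfusing {A} (T : falg) (g : forest A -> fH T) : Prop :=
  exists k, 0 < k /\
    forall (h0 : fH T) (s1 s2 : forest A), equiv_gkG g k h0 s1 s2 -> g s1 = g s2.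

From Stdlib Require Import ClassicalEpsilon.
From mathcomp Require Import all_boot.
Set Implicit Arguments. Unset Strict Implicit. Unset Printing Implicit Defensive.

(* The U1-coordinate is constant on a reachability class of the wreath product,
   so two forests that are equivalent for alpha already agree there, and it
   remains to see that they are equivalent for beta.  The label alpha_Gamma(t)
   of a node determines beta_Gamma(t), provided that U1-value 0 propagates from
   a forest to its subforests, which holds since 0 is only reachable from 0.
   Hence ~_k for the alpha-labelling implies ~_k for the beta-labelling, and
   beta being nonconfusing finishes the proof. *)

Lemma simk_sym (B : Type) k (s s' : forest B) : simk k s s' -> simk k s' s.
Proof.
elim: k s s' => [//|k IH] s s' [Hl Hr]; split=> b t Ht.
- by have [t' [Ht' Hk]] := Hr b t Ht; exists t'; split=> //; apply: IH.
- by have [t' [Ht' Hk]] := Hl b t Ht; exists t'; split=> //; apply: IH.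
Qed.

Lemma in_relabel (A B : Type) (f : forest A -> B) (s : forest A) c u :
  List.In (Node c u) (relabel f s) ->
  exists a t, [/\ List.In (Node a t) s, c = (a, f t) & u = relabel f t].
Proof.
case/List.in_map_iff=> [[a t] [[<- <-] Hin]].
by exists a, t.
Qed.

Lemma relabel_in (A B : Type) (f : forest A -> B) (s : forest A) a t :
  List.In (Node a t) s -> List.In (Node (a, f t) (relabel f t)) (relabel f s).
Proof. exact: List.in_map. Qed.

Section RelabelTransfer.

Variables (A B C : Type) (P : forest A -> Prop).
Variables (f : forest A -> B) (g : forest A -> C) (F : B -> C).
Hypothesis P_child : forall s a t, P s -> List.In (Node a t) s -> P t.
Hypothesis g_factors : forall t, P t -> g t = F (f t).

Lemma simk_relabel_factor k (s s' : forest A) :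
  P s -> P s' -> simk k (relabel f s) (relabel f s') ->
  simk k (relabel g s) (relabel g s').
Proof.
elim: k s s' => [//|k IH] s s'.
have half s1 s2 : P s1 -> P s2 -> simk k.+1 (relabel f s1) (relabel f s2) ->
    forall c u, List.In (Node c u) (relabel g s1) ->
    exists u', List.In (Node c u') (relabel g s2) /\ simk k u u'.
  move=> Ps1 Ps2 [Hl _] c u /in_relabel [a [t [Hin -> ->]]].
  have Pt := P_child Ps1 Hin.
  have [u2 [/in_relabel [a2 [t2 [Hin2 [-> Eft] ->]]] Hk]] :=
    Hl _ _ (relabel_in f Hin).
  have Pt2 := P_child Ps2 Hin2.
  exists (relabel g t2); split; last exact: IH.
  by rewrite g_factors // Eft -g_factors //; apply: relabel_in.
move=> Ps Ps' Hk; split; first exact: half.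
move=> c u /(half _ _ Ps' Ps (simk_sym Hk)) [u' [Hu' Hk']].
by exists u'; split=> //; apply: simk_sym.
Qed.

End RelabelTransfer.

Section WreathU1.

Variable T : falg.
Local Notation W := (wreath T U1).

Lemma in_class_wreathU1 (h0 : fH T) (x0 : U1H) (y : fH W) :
  @in_class W (h0, x0) y -> in_class h0 y.1 /\ y.2 = x0.
Proof.
case: y => h x [[[v f] [E1 E1']] [[w g] [E2 E2']]].
split; first by split; [exists v | exists w].
by move: E1' E2' => /= ->; case: x0 => //=; case: (g _); case: (f _).
Qed.

Lemma above_class_wreathU1 (h0 : fH T) (x0 : U1H) (y : fH W) :
  (x0 = U1zero -> y.2 = U1zero) ->
  above_class h0 y.1 -> @above_class W (h0, x0) y.
Proof.
move=> Hy [[v Ev] Hn]; split.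
- exists (v, fun _ => if x0 is U1zero then U1one else U1const).
  by rewrite /= -Ev; case: x0 Hy => [-> //|].
- by case=> [[w f] E]; apply: Hn; exists w; rewrite E.
Qed.

Definition quot_fst (h0 : fH T) (o : option (fH W)) : option (fH T) :=
  if o is Some y then quot_val h0 y.1 else None.

Lemma quot_val_fst (h0 : fH T) (x0 : U1H) (y : fH W) :
  (x0 = U1zero -> y.2 = U1zero) ->
  quot_val h0 y.1 = quot_fst h0 (@quot_val W (h0, x0) y).
Proof.
move=> Hy; rewrite {2}/quot_val.
case: excluded_middle_informative => [//|Hn] /=.
rewrite /quot_val; case: excluded_middle_informative => // Ha.
by case: Hn; apply: above_class_wreathU1.
Qed.

Variables (A : Type) (alphaH : forest A -> fH W) (alphaV : ctx A -> fV W).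
Hypothesis alpha_hom : is_hom (free_falg A) W alphaH alphaV.

Lemma hom_U1zero_child (s : forest A) a t :
  List.In (Node a t) s -> (alphaH s).2 = U1zero -> (alphaH t).2 = U1zero.
Proof.
move=> Hin; have [l [r ->]] := List.in_split _ _ Hin.
case: alpha_hom => _ _ _ _ Hact.
have := Hact (CNode l a (CHole [::] [::]) r) t.
rewrite /= cats0 => ->; rewrite /=.
by case: (alphaH t).2 => //; case: ((alphaV _).2 _).
Qed.

Lemma equiv_wreathU1_fst k (h0 : fH T) (x0 : U1H) (s1 s2 : forest A) :
  @equiv_gkG _ W alphaH k (h0, x0) s1 s2 ->
  [/\ equiv_gkG (fun s => (alphaH s).1) k h0 s1 s2,
      (alphaH s1).2 = x0 & (alphaH s2).2 = x0].
Proof.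
case=> Hk /in_class_wreathU1 [C1 E1] /in_class_wreathU1 [C2 E2].
split=> //; split=> //.
pose P s := x0 = U1zero -> (alphaH s).2 = U1zero.
apply: (simk_relabel_factor (P := P) (F := quot_fst h0) _ _ _ _ Hk).
- by move=> s a t Ps Hin /Ps; apply: hom_U1zero_child Hin.
- by move=> t; apply: quot_val_fst.
- by rewrite /P E1.
- by rewrite /P E2.
Qed.

End WreathU1.

Theorem lemma7 (A : finType) (T : falg)
  (alphaH : fH (free_falg A) -> fH (wreath T U1))
  (alphaV : fV (free_falg A) -> fV (wreath T U1)) :
  is_falg T -> finite_falg T ->
  (forall h : fH T, fadd T h h = h) ->
  (forall g h : fH T, fadd T g h = fadd T h g) ->
  is_hom (free_falg A) (wreath T U1) alphaH alphaV ->
  nonconfusing (fun s => pi_H (alphaH s)) ->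
  nonconfusing alphaH.
Proof.
move=> _ _ _ _ Hhom [k [k_gt0 beta_nc]]; exists k; split=> // [[h0 x0]] s1 s2.
case/(equiv_wreathU1_fst Hhom) => /beta_nc; rewrite /pi_H => E1 E2 E2'.
by rewrite [alphaH s1]surjective_pairing [alphaH s2]surjective_pairing E1 E2 E2'.
Qed.
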